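(* Consider an ordered linear probing hash table with $n$ slots in some initial state (containing keys and free slots), and a sequence $S$ of insertions and deletions applied to it. For each $s\in[n]$, there exists an interval $P=[r,s-1]$ whose insertion surplus is at least the crossing number $c_s$.
   Context: Ordered linear probing with tombstones: the table has slots $1,\dots,n$ (treated as linearly ordered); each slot holds a key, a tombstone, or is free. A hash function $h$ maps keys to $[n]$; the hash of a tombstone is the hash of the key whose deletion created it. A run is a maximal contiguous sequence of non-free slots; keys and tombstones within each run are stored in order of hash. Deletion of a key replaces it by a tombstone. Insertion of $u$ scans positions $h(u),h(u)+1,\dots$ to find the position $j$ where $u$ belongs in hash order, places $u$ there, and shifts the contents of positions $j,j+1,\dots$ right by one until reaching a tombstone or free slot, which the insertion is said to use (it is overwritten). The peak $p_u$ of an insertion $u$ is the hash of the tombstone it uses, or the position of the free slot it uses. The crossing number $c_i$ is the number of insertions in $S$ with hash smaller than $i$ that either use a tombstone whose hash is at least $i$, or use a free slot in a position at least $i$. A subset $S'\subseteq S_P=\{u\in S:h(u)\in P\}$ is downward-closed if for every $u\in S'$, every $v\in S_P$ occurring temporally before $u$ with $h(v)\ge h(u)$ is in $S'$; its insertion surplus is $\max(0,\ \#\text{insertions in }S' - \#\text{deletions in }S')$. The insertion surplus of an interval $P\subseteq[n]$ is the maximum insertion surplus of a downward-closed subset of $S_P$, minus the number of free slots initially in $P$. *)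

From mathcomp Require Import all_boot all_order all_algebra.
Set Implicit Arguments. Unset Strict Implicit. Unset Printing Implicit Defensive.
Import Order.TTheory GRing.Theory Num.Theory.

(* Content of a slot: free, a key, or a tombstone (carrying its hash, i.e. the
   hash of the key whose deletion created it). *)
Inductive cell (K : Type) := Free | Key of K | Tomb of nat.
Arguments Free {K}. Arguments Key {K}. Arguments Tomb {K}.
Inductive op (K : Type) := Ins of K | Del of K.
Arguments Ins {K}. Arguments Del {K}.
(* What an insertion uses: a free slot at some position, or a tombstone with
   some hash. *)
Inductive use := UFree of nat | UTomb of nat.

Local Open Scope nat_scope.
Section OLP.
Variables (K : eqType) (n : nat) (h : K -> nat).

(* A table state: slot x (1 <= x <= n) holds [sigma x]; other values unused. *)
Definition state := nat -> cell K.

Definition is_free (c : cell K) : bool := if c is Free then true else false.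
Definition is_tomb (c : cell K) : bool := if c is Tomb _ then true else false.
Definition is_key_of (c : cell K) (u : K) : bool :=
  if c is Key k then k == u else false.
Definition cell_hash (c : cell K) : nat :=
  match c with Key k => h k | Tomb p => p | Free => 0 end.

Definition op_key (o : op K) : K := match o with Ins u => u | Del u => u end.
Definition op_hash (o : op K) : nat := h (op_key o).
Definition is_ins (o : op K) : bool := if o is Ins _ then true else false.

Definition find_first (P : pred nat) (a b : nat) : option nat :=
  if [seq x <- iota a (b.+1 - a) | P x] is x :: _ then Some x else None.

(* Insertion of u: the position j where u belongs in hash order is the first
   position >= h u that is free or holds an item of hash >= h u; u is placed
   at j and the contents of j, j+1, ... are shifted right by one up to the
   first tombstone or free slot k (which is used / overwritten). *)
Definition insert (sigma : state) (u : K) : option (state * use) :=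
  if has (fun x => is_key_of (sigma x) u) (iota 1 n) then None else
  match find_first (fun x => is_free (sigma x) || (h u <= cell_hash (sigma x)))
                   (h u) n with
  | None => None
  | Some j =>
    match find_first (fun x => is_free (sigma x) || is_tomb (sigma x)) j n with
    | None => None
    | Some k =>
      let sigma' := fun x => if x == j then Key u
                             else if (j < x <= k) then sigma x.-1 else sigma x in
      let us := if sigma k is Tomb p then UTomb p else UFree k in
      Some (sigma', us)
    end
  end.

Definition delete (sigma : state) (u : K) : option state :=
  match find_first (fun x => is_key_of (sigma x) u) 1 n with
  | None => None
  | Some j => Some (fun x => if x == j then Tomb (h u) else sigma x)
  end.

Fixpoint run (sigma : state) (S : seq (op K)) : option (seq (option use)) :=
  match S with
  | [::] => Some [::]
  | Ins u :: S' =>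
    match insert sigma u with
    | Some (sigma', us) => omap (cons (Some us)) (run sigma' S')
    | None => None
    end
  | Del u :: S' =>
    match delete sigma u with
    | Some sigma' => omap (cons None) (run sigma' S')
    | None => None
    end
  end.

Definition valid_initial (sigma : state) : Prop :=
  [/\ (forall x, 1 <= x <= n -> ~~ is_tomb (sigma x)),
      (forall x y k, 1 <= x <= n -> 1 <= y <= n ->
          sigma x = Key k -> sigma y = Key k -> x = y),
      (forall x k, 1 <= x <= n -> sigma x = Key k ->
          h k <= x /\ (forall y, h k <= y <= x -> ~~ is_free (sigma y)))
    & (forall x, 1 <= x < n -> ~~ is_free (sigma x) -> ~~ is_free (sigma x.+1) ->
          cell_hash (sigma x) <= cell_hash (sigma x.+1))].

Definition crossing_number (S : seq (op K)) (tr : seq (option use)) (i : nat)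
  : nat :=
  count (fun p : op K * option use =>
           match p with
           | (Ins u, Some (UFree k)) => (h u < i) && (i <= k)
           | (Ins u, Some (UTomb q)) => (h u < i) && (i <= q)
           | _ => false
           end) (zip S tr).

Section Surplus.
Variable S : seq (op K).
(* operations of S are identified with their (temporal) index *)
Definition opi (t : 'I_(size S)) : op K := tnth (in_tuple S) t.

Definition S_P (lo hi : nat) : {set 'I_(size S)} :=
  [set t | lo <= op_hash (opi t) <= hi].

Definition downward_closed (lo hi : nat) (A : {set 'I_(size S)}) : bool :=
  (A \subset S_P lo hi) &&
  [forall t in A, forall v in S_P lo hi,
     ((v < t)%N && (op_hash (opi t) <= op_hash (opi v))) ==> (v \in A)].

Definition set_surplus (A : {set 'I_(size S)}) : nat :=
  maxn 0 (#|[set t in A | is_ins (opi t)]| - #|[set t in A | ~~ is_ins (opi t)]|).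

Definition max_surplus (lo hi : nat) : nat :=
  \max_(A : {set 'I_(size S)} | downward_closed lo hi A) set_surplus A.

Definition insertion_surplus (sigma0 : state) (lo hi : nat) : int :=
  (max_surplus lo hi)%:Z
  - (count (fun x => is_free (sigma0 x)) (iota lo (hi.+1 - lo)))%:Z.
End Surplus.
End OLP.

From mathcomp Require Import all_boot all_order all_algebra.
Import Order.TTheory GRing.Theory Num.Theory.
From mathcomp Require Import zify ring.
Set Implicit Arguments. Unset Strict Implicit. Unset Printing Implicit Defensive.

(* Fix a boundary s.  Two quantities are tracked along the run:
   - the overflow over x, i.e. the number of items (keys and tombstones)
     hashed below x but stored at a position >= x; it grows by one at each
     insertion crossing x and is unchanged by every other operation;
   - the number of keys hashed in [a, b), which changes by the insertions
     minus the deletions hashed in [a, b).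
   Right after an insertion of w crossing s, the slots h w, ..., s-1 are
   occupied and no tombstone is hashed in [h w, s).  Comparing both
   quantities at that moment with the initial table yields a balance
   equation (crossing_balance).  By strong induction on s and induction on
   time, every crossing insertion of w extends a witness for the boundary h w
   by the window of operations hashed in [h w, s - 1] (witness_exists); the
   result is downward closed and its surplus pays for the crossings of s and
   the initially free slots of its interval, which is the theorem. *)

Local Open Scope nat_scope.

Lemma find_firstP (P : pred nat) a b x : find_first P a b = Some x ->
  [/\ a <= x <= b, P x & forall y, a <= y < x -> ~~ P y].
Proof.
rewrite /find_first.
case E: [seq y <- iota a (b.+1 - a) | P y] => [|y s] //= [<-].
have : y \in [seq y <- iota a (b.+1 - a) | P y] by rewrite E inE eqxx.
rewrite mem_filter mem_iota => /andP[Py /andP[ay yb]].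
split => //; first by apply/andP; split; lia.
move=> z /andP[az zy]; apply/negP => Pz.
have sorted_ys : sorted ltn (y :: s).
  by rewrite -E; apply: sorted_filter; [exact: ltn_trans | exact: iota_ltn_sorted].
have : z \in y :: s by rewrite -E mem_filter Pz mem_iota; apply/andP; split; lia.
rewrite inE => /orP[/eqP zy'|zs]; first lia.
by have /allP /(_ _ zs) := order_path_min ltn_trans sorted_ys; lia.
Qed.

Section Invariant.
Variables (K : eqType) (n : nat) (h : K -> nat).
Hypothesis hash_range : forall k, 1 <= h k <= n.

Local Notation ch := (cell_hash h).
Local Notation occ c := (~~ is_free c).

Definition probe_inv (sg : state K) : Prop :=
  forall p, 1 <= p <= n -> occ (sg p) ->
    1 <= ch (sg p) <= p /\ forall y, ch (sg p) <= y <= p -> occ (sg y).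

Definition sorted_inv (sg : state K) : Prop :=
  forall x, 1 <= x < n -> occ (sg x) -> occ (sg x.+1) -> ch (sg x) <= ch (sg x.+1).

Definition table_inv (sg : state K) : Prop := probe_inv sg /\ sorted_inv sg.

Lemma hash_sorted_segment sg x z : sorted_inv sg -> 1 <= x <= z -> z <= n ->
  (forall y, x <= y <= z -> occ (sg y)) -> ch (sg x) <= ch (sg z).
Proof.
move=> sorted_sg /andP[x1]; elim: z => [|z IH] xz zn occ_xz; first lia.
case: (ltngtP x z.+1) => [xz'||->] //; last lia.
apply: leq_trans (IH _ _ _) (sorted_sg _ _ _ _); try lia.
- by move=> y y_xz; apply: occ_xz; lia.
- by apply: occ_xz; lia.
- by apply: occ_xz; lia.
Qed.

Lemma hash_after_gap sg k c : table_inv sg -> 1 <= k < n -> occ (sg k.+1) ->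
  c <= k -> is_free (sg k) || (occ (sg k) && (c <= ch (sg k))) ->
  c <= ch (sg k.+1).
Proof.
move=> [probe sorted_sg] k_range occ_k1 ck /orP[free_k | /andP[occ_k c_k]].
- have [_ run_k1] := probe k.+1 (ltac:(lia)) occ_k1.
  case: (leqP (ch (sg k.+1)) k) => [hk|]; last lia.
  by have := run_k1 k (ltac:(lia)); rewrite free_k.
- exact: leq_trans c_k (sorted_sg k k_range occ_k occ_k1).
Qed.

Record insert_shape (sg : state K) w j k (sg' : state K) : Prop := InsertShape {
  ins_range : h w <= j <= k;
  ins_bound : k <= n;
  ins_before : forall y, h w <= y < j -> occ (sg y) && (ch (sg y) < h w);
  ins_slot : is_free (sg j) || (h w <= ch (sg j));
  ins_shifted : forall y, j <= y < k -> occ (sg y) && ~~ is_tomb (sg y);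
  ins_used : is_free (sg k) || is_tomb (sg k);
  ins_state : forall x,
    sg' x = if x == j then Key w else if j < x <= k then sg x.-1 else sg x }.

Lemma insert_spec sg w sg' U : insert n h sg w = Some (sg', U) ->
  exists j k, insert_shape sg w j k sg' /\
              U = if sg k is Tomb p then UTomb p else UFree k.
Proof.
rewrite /insert; case: has => //.
case Ej: find_first => [j|] //; case Ek: find_first => [k|] // [<- <-].
move/find_firstP: Ej => [j_range Pj before_j].
move/find_firstP: Ek => [k_range Pk before_k].
exists j, k; split => //; split => //; try lia.
- by move=> y y_range; have := before_j y; rewrite negb_or -ltnNge; apply; lia.
- by move=> y y_range; have := before_k y; rewrite negb_or; apply; lia.
Qed.

Lemma delete_spec sg u sg' : delete n h sg u = Some sg' ->
  exists j, [/\ 1 <= j <= n, sg j = Key u &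
    forall x, sg' x = if x == j then Tomb (h u) else sg x].
Proof.
rewrite /delete; case Ej: find_first => [j|] // [<-].
move/find_firstP: Ej => [j_range Pj _]; exists j; split => //.
by move: Pj; rewrite /is_key_of; case: (sg j) => // k /eqP ->.
Qed.

Definition slot_sum (f : cell K -> nat) (sg : state K) : nat :=
  \sum_(1 <= p < n.+1) f (sg p).

Definition occupied_before (x : nat) (sg : state K) : nat :=
  \sum_(1 <= p < x) occ (sg p).

Lemma slot_sum_update f sg j c sg' : 1 <= j <= n ->
  (forall x, sg' x = if x == j then c else sg x) ->
  slot_sum f sg' + f (sg j) = slot_sum f sg + f c.
Proof.
move=> j_range sg'E.
rewrite /slot_sum !(big_cat_nat (n := j) (m := 1) (p := n.+1)); try lia.
rewrite [\sum_(j <= i < n.+1) f (sg' i)]big_ltn ?[\sum_(j <= i < n.+1) f (sg i)]big_ltn; try lia.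
have same a b : j \notin index_iota a b ->
    \sum_(a <= i < b) f (sg' i) = \sum_(a <= i < b) f (sg i).
  move=> j_out; apply: eq_big_seq => i i_in; rewrite sg'E.
  by case: eqP => // ij; move: j_out; rewrite -ij i_in.
rewrite !same ?sg'E ?eqxx ?mem_index_iota /=; lia.
Qed.

Lemma occupied_before_update sg j c sg' x :
  (forall y, sg' y = if y == j then c else sg y) -> occ c = occ (sg j) ->
  occupied_before x sg' = occupied_before x sg.
Proof.
move=> sg'E occ_c; apply: eq_big_nat => p _; rewrite sg'E.
by case: eqP => [->|//]; rewrite occ_c.
Qed.

Section InsertStep.
Variables (sg sg' : state K) (w : K) (j k : nat).
Hypothesis shape : insert_shape sg w j k sg'.

Lemma insert_at_slot : sg' j = Key w.
Proof. by rewrite (ins_state shape) eqxx. Qed.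

Lemma insert_shift p : j < p <= k -> sg' p = sg p.-1.
Proof. by move=> p_range; rewrite (ins_state shape) p_range; case: eqP => [pj|//]; lia. Qed.

Lemma insert_untouched p : (p < j) || (k < p) -> sg' p = sg p.
Proof.
move=> p_out; have jk := ins_range shape; rewrite (ins_state shape) ifF ?ifF //; lia.
Qed.

Lemma occupied_after_insert p : occ (sg' p) = occ (sg p) || (p == k).
Proof.
have [jk _ _ _ shifted _ _] := shape.
have [p_out|p_in] := boolP ((p < j) || (k < p)).
  by rewrite insert_untouched // (_ : p == k = false) ?orbF //; lia.
case: (eqVneq p j) => [->|pj].
  rewrite insert_at_slot /=; case: (eqVneq j k) => [_|jk']; first by rewrite orbT.
  by have /andP[-> _] := shifted j (ltac:(lia)).
rewrite insert_shift; last lia.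
have /andP[-> _] := shifted p.-1 (ltac:(lia)).
case: (eqVneq p k) => [_|pk]; first by rewrite orbT.
by have /andP[-> _] := shifted p (ltac:(lia)).
Qed.

Lemma slot_sum_insert f : slot_sum f sg' + f (sg k) = slot_sum f sg + f (Key w).
Proof.
have [jk kn _ _ _ _ _] := shape; have hw := hash_range w.
rewrite /slot_sum !(big_cat_nat (n := j) (m := 1) (p := n.+1)); try lia.
rewrite !(big_cat_nat (n := k.+1) (m := j) (p := n.+1)); try lia.
have same a b : (b <= j) || (k < a) ->
    \sum_(a <= i < b) f (sg' i) = \sum_(a <= i < b) f (sg i).
  by move=> ab; apply: eq_big_nat => i i_range; rewrite insert_untouched //; lia.
rewrite (same 1 j) ?(same k.+1 n.+1); try lia.
rewrite [\sum_(j <= i < k.+1) f (sg' i)]big_ltn ?insert_at_slot; last lia.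
rewrite [\sum_(j <= i < k.+1) f (sg i)]big_nat_recr /=; last lia.
have -> : \sum_(j.+1 <= i < k.+1) f (sg' i) = \sum_(j <= i < k) f (sg i).
  by rewrite big_add1; apply: eq_big_nat => i i_range; rewrite insert_shift //; lia.
lia.
Qed.

Lemma occupied_before_insert x :
  occupied_before x sg' = occupied_before x sg + (is_free (sg k) && (k < x)).
Proof.
have [jk _ _ _ _ _ _] := shape; have hw := hash_range w.
rewrite /occupied_before (eq_big_nat _ _
  (F2 := fun p => occ (sg p) + (if p == k then nat_of_bool (is_free (sg k)) else 0))); last first.
  move=> p _; rewrite occupied_after_insert.
  by case: (eqVneq p k) => [->|]; case: (is_free (sg k)); case: (is_free (sg p)).
rewrite big_split /= -[X in _ + X]big_mkcond big_nat1_eq.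
by case: (is_free (sg k)); case: (leqP 1 k); case: (ltnP k x) => //=; lia.
Qed.

Hypothesis inv : table_inv sg.

Lemma hash_before_insert y : 1 <= y < j -> occ (sg y) -> ch (sg y) <= h w.
Proof.
move=> y_range occ_y; have [jk kn before _ _ _ _] := shape.
case: (leqP (h w) y) => [wy|yw].
  by have /andP[_ ?] := before y (ltac:(lia)); lia.
by have [[? _] _] := (inv.1 y (ltac:(lia)) occ_y, yw); lia.
Qed.

Lemma probe_inv_insert : probe_inv sg'.
Proof.
have [probe _] := inv; have [jk kn before _ shifted _ _] := shape.
have hw := hash_range w.
have grow y : occ (sg y) -> occ (sg' y) by move=> occ_y; rewrite occupied_after_insert occ_y.
move=> p p_range occ_p.
case: (eqVneq p j) => [->|pj].
  rewrite insert_at_slot; split; first by rewrite /=; lia.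
  move=> y /= y_range; case: (eqVneq y j) => [->|yj]; first by rewrite insert_at_slot.
  by apply: grow; have /andP[] := before y (ltac:(lia)).
have [p_in|p_out] := boolP (j < p <= k).
  rewrite insert_shift //.
  have /andP[occ_p1 _] := shifted p.-1 (ltac:(lia)).
  have [hash_p1 run_p1] := probe p.-1 (ltac:(lia)) occ_p1.
  split; first lia.
  move=> y y_range; case: (eqVneq y p) => [->|yp]; first by rewrite insert_shift.
  by apply: grow; apply: run_p1; lia.
have out : (p < j) || (k < p) by lia.
move: occ_p; rewrite occupied_after_insert (_ : p == k = false) ?orbF; last lia.
move=> occ_p; have [hash_p run_p] := probe p p_range occ_p.
by rewrite insert_untouched //; split => // y y_range; apply: grow; apply: run_p.
Qed.

Lemma hash_after_slot : j < n -> occ (sg' j.+1) -> h w <= ch (sg' j.+1).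
Proof.
have [jk kn _ slot shifted used _] := shape; have hw := hash_range w.
move=> jn occ_j1; case: (ltnP j k) => [jk'|kj].
  rewrite insert_shift /=; last lia.
  have /andP[occ_j _] := shifted j (ltac:(lia)).
  by move: slot; rewrite (negbTE occ_j).
have kj' : k = j by lia.
move: occ_j1; rewrite occupied_after_insert (insert_untouched (p := j.+1)); last lia.
rewrite (_ : j.+1 == k = false) ?orbF; last lia.
move=> occ_j1; apply: hash_after_gap; [done | lia | done | lia |].
by move: used slot; rewrite kj'; case: (sg j).
Qed.

Lemma sorted_inv_insert : sorted_inv sg'.
Proof.
have [probe sorted_sg] := inv; have [jk kn _ slot shifted used _] := shape.
have hw := hash_range w.
move=> x x_range occ_x occ_x1.
have [out|] := boolP ((x.+1 < j) || (k < x)).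
  have [xk x1k] : x != k /\ x.+1 != k by lia.
  move: occ_x occ_x1; rewrite !occupied_after_insert (negbTE xk) (negbTE x1k) !orbF.
  by rewrite (insert_untouched (p := x)) ?(insert_untouched (p := x.+1)); try lia; apply: sorted_sg.
rewrite negb_or -!leqNgt => /andP[jx xk].
case: (eqVneq x.+1 j) => [x1j|x1j].
  have xk' : x != k by lia.
  move: occ_x; rewrite occupied_after_insert (negbTE xk') orbF => occ_x.
  rewrite x1j insert_at_slot (insert_untouched (p := x)); last lia.
  by apply: hash_before_insert; first lia.
have occ_k1 : x = k -> occ (sg k.+1).
  move=> xk'; have x1k : x.+1 != k by lia.
  by move: occ_x1; rewrite occupied_after_insert (negbTE x1k) orbF -xk'.
case: (eqVneq x j) => [xj|xj].
  rewrite xj insert_at_slot /=; apply: hash_after_slot; first lia.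
  by rewrite -xj.
have /andP[occ_x0 _] := shifted x.-1 (ltac:(lia)).
have [hash_x0 _] := probe x.-1 (ltac:(lia)) occ_x0.
have sorted_x0 : occ (sg x) -> ch (sg x.-1) <= ch (sg x).
  by have := sorted_sg x.-1 (ltac:(lia)) occ_x0; rewrite prednK //; lia.
case: (ltnP x k) => [xk'|kx].
  rewrite (insert_shift (p := x)) ?(insert_shift (p := x.+1)) /=; try lia.
  by apply: sorted_x0; have /andP[] := shifted x (ltac:(lia)).
have xk' : x = k by lia.
rewrite (insert_shift (p := x)) ?(insert_untouched (p := x.+1)); try lia.
apply: hash_after_gap; [done | lia | rewrite xk'; exact: occ_k1 | lia |].
by move: used sorted_x0; rewrite -xk'; case: (sg x) => //= q _; apply.
Qed.

Lemma table_inv_insert : table_inv sg'.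
Proof. by split; [exact: probe_inv_insert | exact: sorted_inv_insert]. Qed.

Lemma used_tomb_hash q : sg k = Tomb q -> h w <= q <= k.
Proof.
move=> tomb_k; have [probe sorted_sg] := inv; have [jk kn _ slot shifted _ _] := shape.
have hw := hash_range w.
have [hash_k _] := probe k (ltac:(lia)) (ltac:(by rewrite tomb_k)).
move: hash_k; rewrite tomb_k /= => hash_k; apply/andP; split; last lia.
case: (eqVneq j k) => [jk'|jk']; first by move: slot; rewrite jk' tomb_k.
have /andP[occ_j _] := shifted j (ltac:(lia)).
move: slot; rewrite (negbTE occ_j) /= => slot.
apply: leq_trans slot _.
have := hash_sorted_segment (x := j) (z := k) sorted_sg (ltac:(lia)) kn.
rewrite tomb_k; apply => y y_range; case: (eqVneq y k) => [->|yk]; first by rewrite tomb_k.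
by have /andP[] := shifted y (ltac:(lia)).
Qed.

Lemma insert_crossing s : h w < s ->
  (if sg k is Tomb q then s <= q else s <= k) ->
  (forall p, h w <= p < s -> occ (sg' p)) /\
  (forall p, 1 <= p <= n -> is_tomb (sg' p) -> h w <= ch (sg' p) -> s <= ch (sg' p)).
Proof.
move=> ws cross; have [probe sorted_sg] := inv.
have [jk kn before _ shifted used _] := shape.
have hw := hash_range w.
have sk : s <= k.
  by move: cross; case E: (sg k) => [| |q] //; have := used_tomb_hash E; lia.
split.
  move=> p p_range; rewrite occupied_after_insert.
  case: (ltnP p j) => [pj|jp]; first by have /andP[-> _] := before p (ltac:(lia)).
  case: (eqVneq p k) => [_|pk]; first by rewrite orbT.
  by have /andP[-> _] := shifted p (ltac:(lia)).
move=> p p_range tomb_p hash_p; rewrite leqNgt; apply/negP => hash_ps.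
have [p_new|p_old] := boolP ((p == j) || (j < p <= k)).
  move: tomb_p; case/orP: p_new => [/eqP->|p_in]; first by rewrite insert_at_slot.
  by rewrite insert_shift //; have /andP[_ /negbTE->] := shifted p.-1 (ltac:(lia)).
move: tomb_p hash_p hash_ps; rewrite insert_untouched; last lia.
move=> tomb_p hash_p hash_ps.
have occ_p : occ (sg p) by move: tomb_p; case: (sg p).
have [hash_range_p run_p] := probe p p_range occ_p.
case: (ltnP p j) => [pj|jp]; first by have /andP[_ ?] := before p (ltac:(lia)); lia.
have kp : k < p by lia.
have occ_k : occ (sg k) by apply: run_p; lia.
move: used cross; case E: (sg k) => [| |q] //; first by rewrite E in occ_k.
move=> _ sq.
have := hash_sorted_segment (x := k) (z := p) sorted_sg (ltac:(lia)) (ltac:(lia)).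
by rewrite E /= => /(_ (fun y y_range => run_p y (ltac:(lia)))); lia.
Qed.

End InsertStep.

(* Deletions preserve the table invariant: a key becomes a tombstone with
   the same hash. *)
Lemma table_inv_delete sg u j sg' : table_inv sg -> 1 <= j <= n -> sg j = Key u ->
  (forall x, sg' x = if x == j then Tomb (h u) else sg x) -> table_inv sg'.
Proof.
move=> [probe sorted_sg] j_range key_j sg'E.
have occE p : occ (sg' p) = occ (sg p) by rewrite sg'E; case: eqP => // ->; rewrite key_j.
have hashE p : ch (sg' p) = ch (sg p) by rewrite sg'E; case: eqP => // ->; rewrite key_j.
split; last by move=> x x_range; rewrite !occE !hashE; apply: sorted_sg.
move=> p p_range; rewrite occE hashE => occ_p; have [hash_p run_p] := probe p p_range occ_p.
by split => // y y_range; rewrite occE; apply: run_p.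
Qed.

End Invariant.

Section Trajectory.
Variables (K : eqType) (n : nat) (h : K -> nat).

Definition step (sg : state K) (o : op K) : state K :=
  match o with
  | Ins u => if insert n h sg u is Some (sg', _) then sg' else sg
  | Del u => if delete n h sg u is Some sg' then sg' else sg
  end.

Fixpoint state_at (sg : state K) (S : seq (op K)) (t : nat) {struct t} : state K :=
  match t, S with
  | t'.+1, o :: S' => state_at (step sg o) S' t'
  | _, _ => sg
  end.

Lemma run_steps sg S tr : run n h sg S = Some tr ->
  size tr = size S /\ forall t o0, t < size S ->
  match nth o0 S t with
  | Ins u => exists U, insert n h (state_at sg S t) u = Some (state_at sg S t.+1, U) /\
                       nth None tr t = Some U
  | Del u => delete n h (state_at sg S t) u = Some (state_at sg S t.+1) /\
             nth None tr t = None
  end.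
Proof.
elim: S sg tr => [|o S IH] sg tr /=; first by move=> [<-]; split => // t o0; rewrite ltn0.
case: o => u.
- case E: insert => [[sg' U]|] //; case R: (run n h sg' S) => [tr'|] //= [<-].
  have [size_tr steps] := IH _ _ R; split; first by rewrite /= size_tr.
  by move=> [|t] o0 /= t_lt; [rewrite E; exists U; split | rewrite /step E; apply: steps].
- case E: delete => [sg'|] //; case R: (run n h sg' S) => [tr'|] //= [<-].
  have [size_tr steps] := IH _ _ R; split; first by rewrite /= size_tr.
  by move=> [|t] o0 /= t_lt; [rewrite E | rewrite /step E; apply: steps].
Qed.

End Trajectory.

Section Run.
Variables (K : eqType) (n : nat) (h : K -> nat).
Hypothesis hash_range : forall k, 1 <= h k <= n.
Variables (sg0 : state K) (S : seq (op K)) (tr : seq (option use)) (o0 : op K).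
Hypothesis ran : run n h sg0 S = Some tr.
Hypothesis valid : valid_initial n h sg0.

Local Notation ch := (cell_hash h).
Local Notation occ c := (~~ is_free c).
Local Notation st t := (state_at n h sg0 S t).

Lemma table_inv_initial : table_inv n h sg0.
Proof.
have [no_tomb _ key_pos sorted0] := valid; split => // p p_range occ_p.
case E: (sg0 p) occ_p => [|k|q] // _.
- have [hk run_k] := key_pos p k p_range E; have := hash_range k.
  by split; [rewrite /=; lia | move=> y; apply: run_k].
- by have := no_tomb p p_range; rewrite E.
Qed.

Lemma table_inv_at t : t <= size S -> table_inv n h (st t).
Proof.
elim: t => [|t IH] t_le; first exact: table_inv_initial.
have inv := IH (ltnW t_le); have [_ steps] := run_steps ran.
move: (steps t o0 t_le); case: (nth o0 S t) => u.
- move=> [U [ins _]]; have [j [k [shape _]]] := insert_spec ins.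
  exact: (table_inv_insert hash_range shape inv).
- move=> [del _]; have [j [j_range key_j sgE]] := delete_spec del.
  exact: table_inv_delete inv j_range key_j sgE.
Qed.

Definition crosses (x t : nat) : bool :=
  match nth o0 S t, nth None tr t with
  | Ins u, Some (UFree k) => (h u < x) && (x <= k)
  | Ins u, Some (UTomb q) => (h u < x) && (x <= q)
  | _, _ => false
  end.

Definition crossings (x T : nat) : nat := \sum_(0 <= t < T) crosses x t.

Definition items_below (x : nat) (sg : state K) : nat :=
  slot_sum n (fun c => occ c && (ch c < x)) sg.

(* By the probe invariant every item stored below x has hash below x, so this
   is the number of items with hash below x stored at positions >= x. *)
Definition overflow (x : nat) (sg : state K) : int :=
  ((items_below x sg)%:Z - (occupied_before x sg)%:Z)%R.

Lemma overflow_step x t : t < size S ->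
  overflow x (st t.+1) = (overflow x (st t) + (crosses x t)%:Z)%R.
Proof.
move=> t_lt; have inv := table_inv_at (ltnW t_lt); have [_ steps] := run_steps ran.
move: (steps t o0 t_lt); rewrite /crosses /overflow.
case: (nth o0 S t) => u.
- move=> [U [ins ->]]; have [j [k [shape ->]]] := insert_spec ins; clear ins.
  move: (st t.+1) (st t) shape inv => sg' sg shape inv.
  have items : items_below x sg' + (occ (sg k) && (ch (sg k) < x)) =
               items_below x sg + (h u < x) := slot_sum_insert hash_range shape _.
  rewrite (occupied_before_insert hash_range shape x).
  move: items (ins_used shape); case E: (sg k) => [|k'|q] //= items _.
  + have [jk _ _ _ _ _ _] := shape.
    by move: items; case: (ltnP (h u) x); case: (leqP x k) => /= *; lia.
  + have /andP[wq _] := used_tomb_hash hash_range shape inv E.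
    by move: items; case: (ltnP (h u) x); case: (leqP x q) => /= *; lia.
- move=> [del _]; have [j [j_range key_j sgE]] := delete_spec del; clear del.
  move: (st t.+1) (st t) key_j sgE => sg' sg key_j sgE.
  have items : items_below x sg' + (occ (sg j) && (ch (sg j) < x)) =
               items_below x sg + (h u < x) := slot_sum_update _ j_range sgE.
  rewrite (occupied_before_update x sgE); last by rewrite key_j.
  by move: items; rewrite key_j /=; lia.
Qed.

Lemma overflow_at x T : T <= size S ->
  overflow x (st T) = (overflow x sg0 + (crossings x T)%:Z)%R.
Proof.
elim: T => [|T IH] T_le; first by rewrite /crossings big_geq //= addr0.
by rewrite overflow_step // IH ?(ltnW T_le) // /crossings big_nat_recr //= PoszD addrA.
Qed.

Definition keys_in (a b : nat) (sg : state K) : nat :=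
  slot_sum n (fun c => if c is Key k then a <= h k < b else false) sg.

Definition ins_in (a b t : nat) : bool :=
  (a <= op_hash h (nth o0 S t) < b) && is_ins (nth o0 S t).
Definition del_in (a b t : nat) : bool :=
  (a <= op_hash h (nth o0 S t) < b) && ~~ is_ins (nth o0 S t).

Lemma keys_in_step a b t : t < size S ->
  keys_in a b (st t.+1) + del_in a b t = keys_in a b (st t) + ins_in a b t.
Proof.
move=> t_lt; have [_ steps] := run_steps ran.
move: (steps t o0 t_lt); rewrite /ins_in /del_in /op_hash.
case: (nth o0 S t) => u /=.
- move=> [U [ins _]]; have [j [k [shape _]]] := insert_spec ins; clear ins.
  move: (st t.+1) (st t) shape => sg' sg shape.
  have keys := slot_sum_insert hash_range shape
                 (fun c => if c is Key k then a <= h k < b else false).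
  by move: keys (ins_used shape); rewrite /keys_in; case: (sg k) => [|k'|q] //= keys _; lia.
- move=> [del _]; have [j [j_range key_j sgE]] := delete_spec del; clear del.
  move: (st t.+1) (st t) key_j sgE => sg' sg key_j sgE.
  have keys := slot_sum_update (fun c => if c is Key k then a <= h k < b else false) j_range sgE.
  by move: keys; rewrite /keys_in key_j /=; lia.
Qed.

Lemma keys_in_at a b T : T <= size S ->
  keys_in a b (st T) + \sum_(0 <= t < T) del_in a b t =
  keys_in a b sg0 + \sum_(0 <= t < T) ins_in a b t.
Proof.
elim: T => [|T IH] T_le; first by rewrite !big_geq.
rewrite !big_nat_recr //=; have := keys_in_step a b T_le; have := IH (ltnW T_le).
by rewrite /=; lia.
Qed.

Lemma keys_in_items_below (sg : state K) a b : a <= b ->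
  (forall p, 1 <= p <= n -> ~~ (is_tomb (sg p) && (a <= ch (sg p) < b))) ->
  keys_in a b sg + items_below a sg = items_below b sg.
Proof.
move=> ab no_tomb; rewrite /keys_in /items_below /slot_sum -big_split /=.
apply: eq_big_nat => p p_range; have := no_tomb p p_range.
by case: (sg p) => [|k|q] //=; case: (leqP a _); case: (ltnP _ b) => //=; lia.
Qed.

Lemma occupied_before_split (sg : state K) a b : 1 <= a <= b ->
  occupied_before b sg = occupied_before a sg + \sum_(a <= p < b) occ (sg p).
Proof. by move=> ab; rewrite /occupied_before (big_cat_nat (n := a)) //; lia. Qed.

Lemma occupied_plus_free (sg : state K) a b :
  \sum_(a <= p < b) occ (sg p) + \sum_(a <= p < b) is_free (sg p) = b - a.
Proof.
rewrite -big_split /= (eq_big_nat _ _ (F2 := fun _ => 1)) ?sum_nat_const_nat ?muln1 //.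
by move=> p _; case: is_free.
Qed.

Definition initially_free (a b : nat) : nat := \sum_(a <= p < b) is_free (sg0 p).

(* Balance equation for a crossing insertion of w at time t: up to and
   including t, the insertions minus deletions hashed in [h w, s) equal the
   crossings of s minus the crossings of h w plus the initially free slots in
   [h w, s).  This is because right after the insertion the slots h w .. s-1
   are all occupied and no tombstone is hashed in [h w, s). *)
Lemma crossing_balance s t w : t < size S -> nth o0 S t = Ins w -> crosses s t ->
  h w < s /\
  ((\sum_(0 <= t' < t.+1) ins_in (h w) s t')%:Z - (\sum_(0 <= t' < t.+1) del_in (h w) s t')%:Z
   = (crossings s t.+1)%:Z - (crossings (h w) t.+1)%:Z + (initially_free (h w) s)%:Z)%R.
Proof.
move=> t_lt nth_t cross.
have inv := table_inv_at (ltnW t_lt); have [_ steps] := run_steps ran.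
move: (steps t o0 t_lt); rewrite nth_t => -[U [ins used_t]].
have [j [k [shape U_def]]] := insert_spec ins.
have hw := hash_range w.
have [ws ks] : h w < s /\ is_true (if st t k is Tomb q then s <= q else s <= k).
  by move: cross; rewrite /crosses nth_t used_t U_def; case: (st t k) => [|k'|q] /andP[].
have [full no_tomb] := insert_crossing hash_range shape inv ws ks.
split => //.
have keys := keys_in_at (h w) s t_lt.
have keys_now : keys_in (h w) s (st t.+1) + items_below (h w) (st t.+1) =
                items_below s (st t.+1).
  apply: keys_in_items_below; first lia.
  move=> p p_range; apply/negP => /andP[tomb_p /andP[wp ps]].
  by have := no_tomb p p_range tomb_p wp; lia.
have keys_init : keys_in (h w) s sg0 + items_below (h w) sg0 = items_below s sg0.
  apply: keys_in_items_below; first lia.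
  by move=> p p_range; have [no_tomb0 _ _ _] := valid; rewrite (negbTE (no_tomb0 p p_range)).
have occ_now := occupied_before_split (st t.+1) (a := h w) (b := s) (ltac:(lia)).
have occ_init := occupied_before_split sg0 (a := h w) (b := s) (ltac:(lia)).
have all_occ : \sum_(h w <= p < s) occ (st t.+1 p) = s - h w.
  rewrite (eq_big_nat _ _ (F2 := fun _ => 1)) ?sum_nat_const_nat ?muln1 //.
  by move=> p p_range; rewrite full.
have free_init := occupied_plus_free sg0 (h w) s.
have over_s := overflow_at s t_lt; have over_w := overflow_at (h w) t_lt.
move: over_s over_w; rewrite /overflow /initially_free /crossings; lia.
Qed.

End Run.

Lemma card_set_sum (I : finType) (Q : pred I) : #|[set t | Q t]| = \sum_(t : I) Q t.
Proof. by rewrite -sum1dep_card big_mkcond /=; apply: eq_bigr => i _; case: (Q i). Qed.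

Lemma sum_prefix m (F : nat -> nat) T : T <= m ->
  \sum_(t < m) ((t < T) * F t) = \sum_(0 <= t < T) F t.
Proof.
move=> Tm; rewrite -(big_mkord xpredT (fun t => (t < T) * F t)).
rewrite (big_cat_nat (n := T)) //= [X in _ + X]big1_seq ?addn0.
  by apply: eq_big_nat => i i_range; rewrite (_ : i < T) // mul1n.
by move=> i /andP[_]; rewrite mem_index_iota => /andP[Ti _]; rewrite ltnNge Ti.
Qed.

Section Witness.
Variables (K : eqType) (n : nat) (h : K -> nat).
Hypothesis hash_range : forall k, 1 <= h k <= n.
Variables (sg0 : state K) (S : seq (op K)) (tr : seq (option use)) (o0 : op K).
Hypothesis ran : run n h sg0 S = Some tr.
Hypothesis valid : valid_initial n h sg0.

Local Notation ops := {set 'I_(size S)}.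

Definition surplus (A : ops) : int :=
  ((#|[set t in A | is_ins (opi t)]|)%:Z - (#|[set t in A | ~~ is_ins (opi t)]|)%:Z)%R.

Lemma opiE (t : 'I_(size S)) : opi t = nth o0 S t.
Proof. by rewrite /opi (tnth_nth o0). Qed.

Lemma surplus_union (A B : ops) : [disjoint A & B] ->
  surplus (A :|: B) = (surplus A + surplus B)%R.
Proof.
move=> AB; rewrite /surplus !card_set_sum.
have split_sum (P : pred 'I_(size S)) :
    \sum_t ((t \in A :|: B) && P t) = \sum_t ((t \in A) && P t) + \sum_t ((t \in B) && P t).
  rewrite -big_split /=; apply: eq_bigr => t _; rewrite in_setU.
  have := disjointFr AB; case tA: (t \in A); case tB: (t \in B) => //=; last by case: (P t).
  by move/(_ t tA); rewrite tB.
rewrite !split_sum !PoszD; ring.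
Qed.

Definition window (T a s : nat) : ops :=
  [set t : 'I_(size S) | (t < T.+1) && (a <= op_hash h (opi t) <= s - 1)].

Lemma surplus_window T a s : T < size S -> 1 <= s ->
  surplus (window T a s) = ((\sum_(0 <= t < T.+1) ins_in h S o0 a s t)%:Z
                            - (\sum_(0 <= t < T.+1) del_in h S o0 a s t)%:Z)%R.
Proof.
move=> T_lt s1; rewrite /surplus !card_set_sum.
have window_sum (P : bool -> bool) :
    \sum_t ((t \in window T a s) && P (is_ins (opi t))) =
    \sum_(0 <= t < T.+1) ((a <= op_hash h (nth o0 S t) < s) && P (is_ins (nth o0 S t))).
  rewrite -(sum_prefix (m := size S)) //; apply: eq_bigr => t _; rewrite inE opiE.
  rewrite (_ : (op_hash h (nth o0 S t) <= s - 1) = (op_hash h (nth o0 S t) < s)); last lia.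
  by case: (t < T.+1); rewrite //= mul1n.
by rewrite (window_sum id) (window_sum negb).
Qed.

Lemma downward_closed_window T r a s (A : ops) : r <= a -> a < s ->
  downward_closed h r (a - 1) A -> (forall t, t \in A -> t < T.+1) ->
  downward_closed h r (s - 1) (window T a s :|: A).
Proof.
move=> ra as_ /andP[/subsetP A_sub /forall_inP A_closed] A_early.
have A_hash t : t \in A -> r <= op_hash h (opi t) <= a - 1.
  by move=> tA; have := A_sub t tA; rewrite inE.
apply/andP; split.
  apply/subsetP => t; rewrite in_setU !inE => /orP[/andP[_ ?]|tA]; first lia.
  by have := A_hash t tA; lia.
apply/forall_inP => t t_in; apply/forall_inP => v; rewrite inE => v_range.
apply/implyP => /andP[vt tv].
have t_early : t < T.+1.
  by move: t_in; rewrite in_setU inE => /orP[/andP[] | /A_early].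
rewrite in_setU; case: (leqP a (op_hash h (opi v))) => [av|va].
  by rewrite inE; apply/orP; left; apply/andP; split; lia.
have tA : t \in A by move: t_in; rewrite in_setU inE => /orP[/andP[_ ?]|] //; lia.
have v_in : v \in S_P h S r (a - 1) by rewrite inE; lia.
have /forall_inP/(_ v v_in)/implyP := A_closed t tA.
by rewrite vt tv => /(_ isT) ->; rewrite orbT.
Qed.

Definition witness (s T : nat) : Prop := exists r (A : ops),
  [/\ 1 <= r <= s, downward_closed h r (s - 1) A,
      (forall t : 'I_(size S), t \in A -> t < T) &
      ((crossings h S tr o0 s T)%:Z + (initially_free sg0 r s)%:Z <= surplus A)%R].

Lemma witness_start s : 1 <= s -> witness s 0.
Proof.
move=> s1; exists s, set0; split => //; first by rewrite s1 leqnn.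
- apply/andP; split; first by rewrite sub0set.
  by apply/forall_inP => t; rewrite in_set0.
- by move=> t; rewrite in_set0.
- have empty (P : pred 'I_(size S)) : [set t in (set0 : ops) | P t] = set0.
    by apply/setP => t; rewrite !inE.
  by rewrite /surplus /crossings /initially_free !empty cards0 !big_geq.
Qed.

(* Strong induction on s and induction on time: a crossing insertion of w at
   time T extends a witness for h w and time T + 1 by the window of
   operations up to T hashed in [h w, s - 1]; by crossing_balance the window
   has exactly the surplus needed. *)
Lemma witness_exists s : 1 <= s <= n -> forall T, T <= size S -> witness s T.
Proof.
elim/ltn_ind: s => s IHs s_range T.
elim: T => [|T IHT] T_le; first by apply: witness_start; lia.
have [r [A [r_range A_closed A_early A_pays]]] := IHT (ltnW T_le).
case cross: (crosses h S tr o0 s T); last first.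
  exists r, A; split => //; first by move=> t /A_early; lia.
  by rewrite /crossings big_nat_recr //= cross addn0.
case nth_T: (nth o0 S T) => [w|u]; last by move: cross; rewrite /crosses nth_T.
have [ws balance] := crossing_balance hash_range ran valid T_le nth_T cross.
have hw := hash_range w.
have [r' [A' [r'_range A'_closed A'_early A'_pays]]] := IHs (h w) ws hw T.+1 T_le.
exists r', (window T (h w) s :|: A'); split; first lia.
- by apply: (downward_closed_window _ ws A'_closed A'_early); lia.
- by move=> t; rewrite in_setU inE => /orP[/andP[]|/A'_early].
rewrite surplus_union; last first.
  rewrite -setI_eq0; apply/eqP/setP => t; rewrite !inE.
  apply/negP => /andP[/andP[_ wt] tA'].
  by move: A'_closed => /andP[/subsetP/(_ t tA')]; rewrite inE; lia.
rewrite surplus_window //; last lia.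
rewrite balance; have -> : initially_free sg0 r' s =
    initially_free sg0 r' (h w) + initially_free sg0 (h w) s.
  by rewrite /initially_free (big_cat_nat (n := h w)) //; lia.
by move: A'_pays; rewrite PoszD; lia.
Qed.

End Witness.

Lemma crossing_number_sum (K : eqType) (h : K -> nat) S tr (o0 : op K) s :
  size tr = size S -> crossing_number h S tr s = crossings h S tr o0 s (size S).
Proof.
move=> size_tr; rewrite /crossing_number /crossings -sum1_count big_mkcond /=.
rewrite (big_nth (o0, None)) size_zip size_tr minnn.
by apply: eq_big_nat => i _; rewrite nth_zip.
Qed.

Lemma free_count_sum (K : eqType) (sg0 : state K) r s : 1 <= s ->
  count (fun x => is_free (sg0 x)) (iota r ((s - 1).+1 - r)) = initially_free sg0 r s.
Proof.
move=> s1; rewrite (_ : (s - 1).+1 = s); last lia.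
rewrite /initially_free -sum1_count big_mkcond /=.
by apply: eq_bigr => i _; case: is_free.
Qed.

Local Open Scope ring_scope.

Theorem mainTheorem7 (K : eqType) (n : nat) (h : K -> nat)
  (sigma0 : nat -> cell K) (S : seq (op K)) (tr : seq (option use)) :
  (forall k, (1 <= h k <= n)%N) ->
  valid_initial n h sigma0 ->
  run n h sigma0 S = Some tr ->
  forall s : nat, (1 <= s <= n)%N ->
  exists r : nat, (1 <= r <= s)%N /\
    ((crossing_number h S tr s)%:Z <= insertion_surplus h S sigma0 r (s - 1))%R.
Proof.
move=> hash_range valid ran s s_range.
case: S ran => [|o0 S'] ran.
  exists s; split; first lia.
  rewrite /crossing_number /insertion_surplus (_ : ((s - 1).+1 - s)%N = 0%N) /=; last lia.
  by case: tr {ran}.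
set S := o0 :: S' in ran *.
have [r [A [r_range A_closed _ A_pays]]] :=
  witness_exists hash_range o0 ran valid s_range (leqnn (size S)).
exists r; split => //.
have [size_tr _] := run_steps ran.
rewrite (crossing_number_sum h o0 s size_tr) /insertion_surplus free_count_sum; last lia.
have A_max : (set_surplus A <= max_surplus h S r (s - 1))%N.
  exact: (leq_bigmax_cond (P := fun A => downward_closed h r (s - 1) A)).
move: A_pays A_max; rewrite /surplus /set_surplus; lia.
Qed.
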